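(* Let $T$ be a near-truss and $P$ a non-empty normal sub-heap of $T$. Then $P$ is a paragon if and only if $P$ is left-closed and all equivalence classes of the sub-heap relation $\sim_P$ are right-closed. In particular, if $T$ is a skew truss, then $P$ is a paragon if and only if $P$ is a closed normal sub-heap.
   Context: A heap is a set with a ternary operation $[-,-,-]$ satisfying $[a_1,a_2,[a_3,a_4,a_5]]=[[a_1,a_2,a_3],a_4,a_5]$ and $[a,a,b]=b=[b,a,a]$. A normal sub-heap is a non-empty subset $S$ closed under $[-,-,-]$ with $[[a,e,s],a,e]\in S$ for all $a$ and $e,s\in S$; $a\sim_S b$ iff $[a,b,s]\in S$ for some (equivalently all) $s\in S$. A pre-truss is a heap with an associative multiplication; a near-truss satisfies $a[b,c,d]=[ab,ac,ad]$; a skew truss is a near-truss also satisfying $[b,c,d]a=[ba,ca,da]$. A sub-heap $S$ is left-closed if $[ts',ts,s]\in S$ for all $s,s'\in S$, $t\in T$, right-closed if $[s't,st,s]\in S$, closed if both. A paragon is a non-empty normal sub-heap $P$ such that every equivalence class of $\sim_P$ is a closed sub-heap. *)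

Set Implicit Arguments.
Section Heaps.
Variable T : Type.
Variable br : T -> T -> T -> T.
Variable mul : T -> T -> T.

Definition is_heap : Prop :=
  (forall a1 a2 a3 a4 a5,
      br a1 a2 (br a3 a4 a5) = br (br a1 a2 a3) a4 a5) /\
  (forall a b, br a a b = b) /\
  (forall a b, br b a a = b).

Definition is_pre_truss : Prop :=
  is_heap /\ (forall a b c, mul a (mul b c) = mul (mul a b) c).

Definition is_near_truss : Prop :=
  is_pre_truss /\
  (forall a b c d, mul a (br b c d) = br (mul a b) (mul a c) (mul a d)).

Definition is_skew_truss : Prop :=
  is_near_truss /\
  (forall a b c d, mul (br b c d) a = br (mul b a) (mul c a) (mul d a)).

Definition sub_heap (S : T -> Prop) : Prop :=
  (exists s, S s) /\ (forall a b c, S a -> S b -> S c -> S (br a b c)).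

Definition normal_sub_heap (S : T -> Prop) : Prop :=
  sub_heap S /\ (forall a e s, S e -> S s -> S (br (br a e s) a e)).

Definition sim (S : T -> Prop) (a b : T) : Prop :=
  exists s, S s /\ S (br a b s).

Definition sim_class (S : T -> Prop) (a : T) : T -> Prop := fun b => sim S a b.

Definition left_closed (S : T -> Prop) : Prop :=
  forall s s' t, S s -> S s' -> S (br (mul t s') (mul t s) s).

Definition right_closed (S : T -> Prop) : Prop :=
  forall s s' t, S s -> S s' -> S (br (mul s' t) (mul s t) s).

Definition closed (S : T -> Prop) : Prop := left_closed S /\ right_closed S.

Definition paragon (P : T -> Prop) : Prop :=
  normal_sub_heap P /\
  (forall a, sub_heap (sim_class P a) /\ closed (sim_class P a)).

End Heaps.

(* For a normal sub-heap P, the relation ~_P is a congruence of the heap whose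
   class through any element of P is P itself.  A map h that preserves ~_P
   makes every class closed under (s, s') |-> [h s', h s, s], since
   [h s', h s, s] ~_P s.  In a near-truss, left-closedness of P says exactly
   that every left multiplication preserves ~_P, because
   [t[s',s,p], tp, p] = [ts', ts, p]; symmetrically for right multiplications
   in a skew truss.  Conversely, closedness of the class of P is closedness of P. *)

From Stdlib Require Import Setoid.
Set Implicit Arguments.

Section NormalSubHeap.
Variable T : Type.
Variable br : T -> T -> T -> T.
Hypothesis br_assoc :
  forall a1 a2 a3 a4 a5, br a1 a2 (br a3 a4 a5) = br (br a1 a2 a3) a4 a5.
Hypothesis br_aab : forall a b, br a a b = b.
Hypothesis br_baa : forall a b, br b a a = b.

Lemma br_mid x a b c y : br x (br a b c) y = br (br x c b) a y.
Proof.
  assert (E : br (br x c b) a (br a b c) = x).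
  { rewrite br_assoc, br_baa, <- br_assoc, br_aab, br_baa. reflexivity. }
  rewrite <- (br_aab (br a b c) y) at 2. rewrite br_assoc, E. reflexivity.
Qed.

Variable P : T -> Prop.
Hypothesis P_normal : normal_sub_heap br P.

Lemma normal_br a b c : P a -> P b -> P c -> P (br a b c).
Proof. destruct P_normal as [[_ H] _]. apply H. Qed.

Lemma sim_forall a b : sim br P a b -> forall s, P s -> P (br a b s).
Proof.
  intros [s0 [Hs0 H]] s Hs.
  replace (br a b s) with (br (br a b s0) s0 s)
    by (rewrite <- br_assoc, br_aab; reflexivity).
  apply normal_br; assumption.
Qed.

Lemma sim_refl a : sim br P a a.
Proof.
  destruct P_normal as [[[s Hs] _] _].
  exists s; split; [assumption|]. rewrite br_aab. assumption.
Qed.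

Lemma sim_sym a b : sim br P a b -> sim br P b a.
Proof.
  intros [s [Hs H]]. exists s; split; [assumption|].
  replace (br b a s) with (br s (br a b s) s)
    by (rewrite br_mid, br_aab; reflexivity).
  apply normal_br; assumption.
Qed.

Lemma sim_trans a b c : sim br P a b -> sim br P b c -> sim br P a c.
Proof.
  intros [s [Hs H]] Hbc. exists s; split; [assumption|].
  replace (br a c s) with (br (br a b s) s (br b c s))
    by (rewrite <- br_assoc, br_aab, br_assoc, br_baa; reflexivity).
  apply normal_br; auto using sim_forall.
Qed.

Lemma normal_br_sim s z y : sim br P z y -> P s -> P (br s z y).
Proof.
  intros Hzy Hs.
  pose proof (sim_forall (sim_sym Hzy) Hs) as Hyzs.
  destruct P_normal as [_ HN].
  replace (br s z y)
    with (br (br (br s z s) s (br y z s)) (br s z s) s) by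
    (rewrite (br_assoc (br s z s) s y z s), <- (br_assoc s z s s y), br_aab,
       <- br_assoc, br_mid, br_aab, br_baa, br_baa; reflexivity).
  apply HN; assumption.
Qed.

Lemma sim_class_sub_heap a : sub_heap br (sim_class br P a).
Proof.
  split; [exists a; apply sim_refl|].
  unfold sim_class. intros x y z Hx Hy Hz.
  apply (sim_trans Hx).
  assert (Hzy : sim br P z y) by exact (sim_trans (sim_sym Hz) Hy).
  destruct P_normal as [[[s Hs] _] HN].
  exists s; split; [assumption|].
  rewrite br_mid.
  replace (br x z y) with (br x s (br s z y))
    by (rewrite br_assoc, br_baa; reflexivity).
  apply HN; auto using normal_br_sim.
Qed.

Lemma sim_class_mem p : P p -> forall b, sim_class br P p b <-> P b.
Proof.
  intros Hp b; split.
  - intros [s [Hs H]].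
    replace b with (br s (br p b s) p)
      by (rewrite br_mid, br_aab, br_baa; reflexivity).
    apply normal_br; assumption.
  - intros Hb. exists p; split; [assumption|]. apply normal_br; assumption.
Qed.

Lemma sim_class_br_hom a (h : T -> T) :
  (forall u u', sim br P u' u -> sim br P (h u') (h u)) ->
  forall s s', sim_class br P a s -> sim_class br P a s' ->
    sim_class br P a (br (h s') (h s) s).
Proof.
  unfold sim_class. intros Hh s s' Hs Hs'.
  apply (sim_trans Hs), sim_sym.
  destruct (Hh _ _ (sim_trans (sim_sym Hs') Hs)) as [p [Hp H]].
  exists p; split; [assumption|]. rewrite <- br_assoc, br_aab. assumption.
Qed.

Section Multiplication.
Variable mul : T -> T -> T.

Lemma left_closed_sim_class p :
  P p -> left_closed br mul (sim_class br P p) <-> left_closed br mul P.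
Proof.
  intros Hp. unfold left_closed.
  split; intros Hl s s' t Hs Hs'; apply (sim_class_mem Hp);
    apply Hl; apply (sim_class_mem Hp); assumption.
Qed.

Lemma right_closed_sim_class p :
  P p -> right_closed br mul (sim_class br P p) <-> right_closed br mul P.
Proof.
  intros Hp. unfold right_closed.
  split; intros Hr s s' t Hs Hs'; apply (sim_class_mem Hp);
    apply Hr; apply (sim_class_mem Hp); assumption.
Qed.

Hypothesis mul_br :
  forall a b c d, mul a (br b c d) = br (mul a b) (mul a c) (mul a d).

Lemma left_closed_sim_mull :
  left_closed br mul P ->
  forall t u u', sim br P u' u -> sim br P (mul t u') (mul t u).
Proof.
  intros Hl t u u' [q [Hq H]]. exists q; split; [assumption|].
  pose proof (Hl q _ t Hq H) as K.
  rewrite mul_br, <- br_assoc, br_aab in K. exact K.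
Qed.

Lemma paragon_near_trussP :
  paragon br mul P <->
  left_closed br mul P /\ forall a, right_closed br mul (sim_class br P a).
Proof.
  destruct P_normal as [[[p Hp] _] _].
  split.
  - intros [_ Hcl]. split; [|intros a; apply (Hcl a)].
    apply (left_closed_sim_class Hp), (Hcl p).
  - intros [Hl Hr]. split; [assumption|]. intros a.
    split; [apply sim_class_sub_heap|]. split; [|apply Hr].
    intros s s' t. apply sim_class_br_hom, left_closed_sim_mull; assumption.
Qed.

Hypothesis br_mul :
  forall a b c d, mul (br b c d) a = br (mul b a) (mul c a) (mul d a).

Lemma right_closed_sim_mulr :
  right_closed br mul P ->
  forall t u u', sim br P u' u -> sim br P (mul u' t) (mul u t).
Proof.
  intros Hr t u u' [q [Hq H]]. exists q; split; [assumption|].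
  pose proof (Hr q _ t Hq H) as K.
  rewrite br_mul, <- br_assoc, br_aab in K. exact K.
Qed.

Lemma paragon_skew_trussP : paragon br mul P <-> closed br mul P.
Proof.
  rewrite paragon_near_trussP. unfold closed.
  destruct P_normal as [[[p Hp] _] _].
  split; intros [Hl Hr]; split; try assumption.
  - apply (right_closed_sim_class Hp), Hr.
  - intros a s s' t.
    apply (@sim_class_br_hom a (fun x => mul x t)), right_closed_sim_mulr;
      assumption.
Qed.

End Multiplication.
End NormalSubHeap.

Theorem corollary3p12 :
  (forall (T : Type) (br : T -> T -> T -> T) (mul : T -> T -> T) (P : T -> Prop),
      is_near_truss br mul -> normal_sub_heap br P ->
      (paragon br mul P <->
       (left_closed br mul P /\ forall a, right_closed br mul (sim_class br P a)))) /\
  (forall (T : Type) (br : T -> T -> T -> T) (mul : T -> T -> T) (P : T -> Prop),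
      is_skew_truss br mul -> normal_sub_heap br P ->
      (paragon br mul P <-> closed br mul P)).
Proof.
  split.
  - intros T br mul P [[[br_assoc [br_aab br_baa]] _] mul_br] HP.
    apply paragon_near_trussP; assumption.
  - intros T br mul P [[[[br_assoc [br_aab br_baa]] _] mul_br] br_mul] HP.
    apply paragon_skew_trussP; assumption.
Qed.
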